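(* Let $G$ be a connected nonbipartite graph with vertex set $\{u_1,\dots,u_m\}$ and $\kappa(G)=\delta(G)>0$, and let $n\ge 3$. Let $S\subseteq V(G\times K_n)$ satisfy: (1) $|S|=(n-1)\delta(G)$; (2) $S_i':=S_i\setminus S\neq\varnothing$ for every $i=1,\dots,m$; (3) $G\times K_n-S$ has no isolated vertex. Then for every $i\in\{1,\dots,m\}$, the set $S_i'$ is contained in the vertex set of a single connected component of $G\times K_n-S$.
   Context: The Kronecker product $G_1\times G_2$ has vertex set $V(G_1)\times V(G_2)$, with $(u_1,v_1)(u_2,v_2)$ an edge iff $u_1u_2\in E(G_1)$ and $v_1v_2\in E(G_2)$. Write $V(K_n)=\{v_1,\dots,v_n\}$ and $S_i=\{u_i\}\times V(K_n)$ for $i=1,\dots,m$. *)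

From mathcomp Require Import all_boot all_order.
Set Implicit Arguments. Unset Strict Implicit. Unset Printing Implicit Defensive.

Section Graphs.
Variable V : finType.

Definition simple_graph (e : rel V) : Prop := symmetric e /\ irreflexive e.

(* the subgraph induced on the complement of X: adjacency restricted to vertices outside X *)
Definition del_rel (e : rel V) (X : {set V}) : rel V :=
  fun x y => [&& x \notin X, y \notin X & e x y].

Definition connected_graph (e : rel V) : Prop := forall x y : V, connect e x y.

Definition bipartite (e : rel V) : Prop :=
  exists f : V -> bool, forall x y, e x y -> f x != f y.

Definition degree (e : rel V) (v : V) : nat := #|[set w | e v w]|.

(* minimum degree delta(G) (0 for the empty graph) *)
Definition min_degree (e : rel V) : nat := \big[minn/#|V|]_(v : V) degree e v.

Definition disconnects (e : rel V) (X : {set V}) : bool :=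
  [exists a, exists b, [&& a \notin X, b \notin X & ~~ connect (del_rel e X) a b]].

Definition vertex_connectivity (e : rel V) : nat :=
  \big[minn/#|V|]_(X : {set V} | disconnects e X || (#|~: X| <= 1)) #|X|.
End Graphs.

Definition Kn_rel (n : nat) : rel 'I_n := fun i j => i != j.

Definition kron_Kn (V : finType) (e : rel V) (n : nat) : rel (V * 'I_n) :=
  fun x y => e x.1 y.1 && Kn_rel x.2 y.2.

Definition fiber (V : finType) (n : nat) (u : V) : {set V * 'I_n} :=
  [set x | x.1 == u].
Arguments fiber {V} n u.
Arguments kron_Kn {V} e n.

From mathcomp Require Import all_boot all_order.

Set Implicit Arguments.
Unset Strict Implicit.
Unset Printing Implicit Defensive.

(* Suppose (u,a) and (u,b) lie in different components of G x K_n - S, and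
   call a surviving vertex a-sided if it lies in the component of (u,a).  An
   edge vw of G with c <> d joins (v,c) to (w,d), so a vertex adjacent to both
   a surviving (w,a) and a surviving (w,b) with opposite sides must have every
   other copy deleted.  Let P be the set of vertices whose a- or b-copy is
   deleted.  Counting S layer by layer (each of the n - 2 layers other than a
   and b contains N(u) and u) gives |P| < delta <= kappa, so G - P is
   connected and "the two copies of v have opposite sides" spreads from u to
   all of G - P.  Now fix a neighbour h of u outside P.  A neighbour of h is
   either a common neighbour of u and h, hence in both layers a and b of S, or
   a non-neighbour of u with a neighbour outside P, whose copies other than a
   and b are all deleted; counting once more, delta <= |N(h)| forces P to be
   empty, and then v |-> side of (v,a) properly 2-colours G. *)

Lemma geq_bigminn_cond (I : finType) (P : pred I) (F : I -> nat) x j :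
  P j -> \big[minn/x]_(i | P i) F i <= F j.
Proof.
move=> Pj; rewrite -big_filter.
have : j \in [seq i <- index_enum I | P i] by rewrite mem_filter Pj mem_index_enum.
elim: (filter _ _) => [|k s IHs] //; rewrite big_cons inE => /predU1P[<-|/IHs].
  exact: geq_minl.
exact: leq_trans (geq_minr _ _).
Qed.

Lemma card_setX_slices (T1 T2 : finType) (S : {set T1 * T2}) :
  #|S| = \sum_(j : T2) #|[set i | (i, j) \in S]|.
Proof.
under eq_bigr => j _ do rewrite -sum1_card big_mkcond /=.
rewrite exchange_big pair_big -sum1_card big_mkcond /=.
by apply: eq_bigr => -[i j] _; rewrite inE.
Qed.

Section GraphFacts.
Variables (V : finType) (e : rel V).

Lemma min_degree_le_degree v : min_degree e <= degree e v.
Proof. exact: (@geq_bigminn_cond _ predT). Qed.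

Lemma del_rel_sym (X : {set V}) : symmetric e -> symmetric (del_rel e X).
Proof. by move=> e_sym x y; rewrite /del_rel e_sym andbCA. Qed.

Lemma connect_del_lt_vertex_connectivity (X : {set V}) a b :
  #|X| < vertex_connectivity e -> a \notin X -> b \notin X ->
  connect (del_rel e X) a b.
Proof.
move=> X_lt aX bX; apply: contraTT X_lt => not_ab; rewrite -leqNgt.
apply: (@geq_bigminn_cond _ (fun X => disconnects e X || (#|~: X| <= 1))).
by apply/orP; left; apply/existsP; exists a; apply/existsP; exists b; rewrite aX bX.
Qed.

End GraphFacts.

Lemma kron_Kn_sym (V : finType) (e : rel V) n :
  symmetric e -> symmetric (kron_Kn e n).
Proof. by move=> e_sym x y; rewrite /kron_Kn /Kn_rel e_sym eq_sym. Qed.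

Lemma add_leq_of_mul_leq_mulS k N Y q d : 0 < k -> d <= N ->
  k * (N + Y) + q <= k.+1 * d -> Y + q <= d.
Proof.
move=> k_gt0 dN le_kd; apply: leq_trans (_ : k * Y + q <= d).
  by rewrite leq_add2r leq_pmull.
rewrite -(leq_add2r (k * N)) addnAC -mulnDr (addnC Y).
apply: leq_trans le_kd _; rewrite mulSn leq_add2l.
by rewrite leq_mul2l dN orbT.
Qed.

Section SplitFibre.
Variables (V : finType) (e : rel V) (n : nat) (S : {set V * 'I_n}).
Hypotheses (e_sym : symmetric e) (e_irr : irreflexive e).
Variables (u : V) (a b : 'I_n).
Hypotheses (uaS : (u, a) \notin S) (ubS : (u, b) \notin S).

Local Notation F := (del_rel (kron_Kn e n) S).
Hypothesis ua_ub_disconnected : ~~ connect F (u, a) (u, b).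

Local Notation side p := (connect F (u, a) p).
Local Notation separated v := (side (v, a) != side (v, b)).
Local Notation layer c := [set v | (v, c) \in S].
Local Notation P := (layer a :|: layer b).

Lemma side_edge v w c d : (v, c) \notin S -> (w, d) \notin S ->
  e v w -> c != d -> side (v, c) = side (w, d).
Proof.
move=> vcS wdS evw cd.
have F_sym : symmetric F by apply/del_rel_sym/kron_Kn_sym.
have F_vw : F (v, c) (w, d) by rewrite /del_rel /kron_Kn /Kn_rel /= vcS wdS evw cd.
exact: (same_connect1r (sym_connect_sym F_sym) F_vw (u, a)).
Qed.

Lemma neq_ab : a != b.
Proof. by apply: contraNneq ua_ub_disconnected => ->; apply: connect0. Qed.

Lemma neq_ba : b != a.
Proof. by rewrite eq_sym neq_ab. Qed.

Lemma separated_u : separated u.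
Proof. by rewrite connect0 ua_ub_disconnected. Qed.

Lemma in_S_of_separated_nbr w z c : (w, a) \notin S -> (w, b) \notin S ->
  separated w -> e z w -> c \notin [set a; b] -> (z, c) \in S.
Proof.
move=> waS wbS sep_w ezw; rewrite in_set2 negb_or => /andP[ca cb].
apply: contraR sep_w => zcS.
by rewrite -(side_edge zcS waS ezw ca) -(side_edge zcS wbS ezw cb).
Qed.

Lemma nbr_u_in_S w c : e u w -> c \notin [set a; b] -> (w, c) \in S.
Proof. by rewrite e_sym; apply: in_S_of_separated_nbr separated_u. Qed.

Lemma in_S_common_nbr v w z c d : c != d ->
  (v, c) \notin S -> (v, d) \notin S -> (w, d) \notin S ->
  side (v, c) != side (v, d) -> e v w -> e z v -> e z w -> (z, c) \in S.
Proof.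
move=> cd vcS vdS wdS sep_v evw ezv ezw; apply: contraR sep_v => zcS.
rewrite -(side_edge zcS vdS ezv cd) (side_edge zcS wdS ezw cd).
by rewrite (side_edge wdS vcS) // 1?e_sym // eq_sym.
Qed.

Hypothesis no_isolated :
  forall x, x \notin S -> exists y, (y \notin S) && kron_Kn e n x y.

Lemma exists_free_nbr c d :
  (u, c) \notin S -> c != d -> [set c; d] = [set a; b] -> exists2 w, e u w & (w, d) \notin S.
Proof.
move=> ucS cd cd_ab; have [[w d'] /andP[wdS]] := no_isolated ucS.
rewrite /kron_Kn /Kn_rel /= => /andP[euw cd']; exists w => //.
have [<- //|d'd] := eqVneq d' d.
by move: wdS; rewrite nbr_u_in_S // -cd_ab !inE negb_or eq_sym cd' d'd.
Qed.

Lemma fibre_u_in_S c : c \notin [set a; b] -> (u, c) \in S.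
Proof.
move=> cab; apply: contraR separated_u => ucS.
move: cab; rewrite in_set2 negb_or => /andP[ca cb].
have [w euw wbS] := exists_free_nbr uaS neq_ab (erefl _).
have [w' euw' w'aS] := exists_free_nbr ubS neq_ba (setUC _ _).
rewrite (side_edge uaS wbS euw neq_ab) -(side_edge ucS wbS euw cb).
by rewrite (side_edge ucS w'aS euw' ca) -(side_edge ubS w'aS euw' neq_ba).
Qed.

Hypotheses (n_gt2 : 2 < n) (card_S_le : #|S| <= (n - 1) * min_degree e).

Lemma layers_card_le (Y : {set V}) : {in Y, forall z, ~~ e u z} ->
    {in Y, forall z c, c \notin [set a; b] -> (z, c) \in S} ->
  #|Y| + #|layer a| + #|layer b| <= min_degree e.
Proof.
move=> Y_nbr Y_S; set N := [set w | e u w].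
have NY_disj : [disjoint N & Y].
  by apply/pred0P => z /=; rewrite inE; apply/andP => -[euz /Y_nbr]; rewrite euz.
have layer_ge c : c \notin [set a; b] -> #|N| + #|Y| <= #|layer c|.
  move=> cab; have -> : #|N| + #|Y| = #|N :|: Y|.
    by rewrite cardsU (disjoint_setI0 NY_disj) cards0 subn0.
  apply/subset_leq_card/subsetP => z; rewrite !inE => /orP[euz|zY].
    exact: nbr_u_in_S.
  exact: Y_S.
have card_C : #|~: [set a; b]| = n - 2 by rewrite cardsCs setCK cards2 neq_ab card_ord.
have count : (n - 2) * (#|N| + #|Y|) + #|layer a| + #|layer b| <= #|S|.
  rewrite (card_setX_slices S) (bigD1 a) //= (bigD1 b) ?neq_ba //=.
  rewrite -addnA [X in _ <= X]addnA [X in _ <= X]addnC leq_add2r.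
  rewrite -card_C -sum_nat_const.
  apply: (@leq_trans (\sum_(c in ~: [set a; b]) #|layer c|)).
    by apply: leq_sum => c; rewrite inE; apply: layer_ge.
  by apply/eq_leq/eq_bigl => c; rewrite !inE negb_or.
have N_ge : min_degree e <= #|N| by apply: min_degree_le_degree.
have n1 : n - 1 = (n - 2).+1 by rewrite -subSn // ltnW.
rewrite -addnA; apply: (@add_leq_of_mul_leq_mulS (n - 2) #|N|); rewrite ?subn_gt0 //.
by rewrite addnA -n1; apply: leq_trans count card_S_le.
Qed.

Lemma notin_layers_u : u \notin P.
Proof. by rewrite !inE negb_or uaS ubS. Qed.

Lemma card_layers_lt : #|P| < min_degree e.
Proof.
apply: leq_ltn_trans (leq_card_setU _ _) _.
rewrite -add1n addnA -(cards1 u); apply: layers_card_le => z; rewrite inE => /eqP->.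
  by rewrite e_irr.
exact: fibre_u_in_S.
Qed.

Hypothesis connectivity_ge : min_degree e <= vertex_connectivity e.

Lemma separated_outside_layers v : v \notin P -> separated v.
Proof.
have closed_sep : closed (del_rel e P) [pred v | separated v].
  move=> x y /and3P[]; rewrite !inE !negb_or => /andP[xaS xbS] /andP[yaS ybS] exy.
  by rewrite /= (side_edge xaS ybS exy neq_ab) (side_edge xbS yaS exy neq_ba) eq_sym.
move=> vP; have conn_uv : connect (del_rel e P) u v.
  apply: connect_del_lt_vertex_connectivity notin_layers_u vP.
  exact: leq_trans card_layers_lt _.
by move: (closed_connect closed_sep conn_uv); rewrite !inE separated_u => <-.
Qed.

Lemma common_nbr_in_layers v w z : v \notin P -> w \notin P ->
  e v w -> e z v -> e z w -> z \in layer a :&: layer b.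
Proof.
move=> vP wP evw ezv ezw; have sep_v := separated_outside_layers vP.
move: vP wP; rewrite !inE !negb_or => /andP[vaS vbS] /andP[waS wbS].
rewrite (in_S_common_nbr neq_ab vaS vbS wbS sep_v evw ezv ezw).
by rewrite (in_S_common_nbr neq_ba vbS vaS waS _ evw ezv ezw) // eq_sym.
Qed.

Lemma bipartite_of_disconnected_fibre : bipartite e.
Proof.
have [h euh hP] : exists2 h, e u h & h \notin P.
  have : ~~ ([set w | e u w] \subset P).
    apply: contraTN card_layers_lt => /subset_leq_card sub.
    by rewrite -leqNgt (leq_trans (min_degree_le_degree e u)).
  by case/subsetPn => w; rewrite inE; exists w.
pose Z := [set z | ~~ e u z & [exists w, (w \notin P) && e z w]].
have Z_le : #|Z| + #|layer a| + #|layer b| <= min_degree e.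
  apply: layers_card_le => z; rewrite inE => /andP[// euz /existsP[w /andP[wP ezw]]].
  move: (wP); rewrite !inE negb_or => /andP[waS wbS] c.
  exact: in_S_of_separated_nbr (separated_outside_layers wP) ezw.
have Nh_sub : [set v | e h v] \subset Z :|: (layer a :&: layer b).
  apply/subsetP => v; rewrite inE => ehv; rewrite inE; have [euv|neuv] := boolP (e u v).
    by rewrite (common_nbr_in_layers notin_layers_u hP euh) ?orbT // e_sym.
  by rewrite inE neuv; apply/orP; left; apply/existsP; exists h; rewrite hP e_sym.
have P0 : P = set0.
  apply/eqP; rewrite -cards_eq0 -leqn0 -(leq_add2l (#|Z| + #|layer a :&: layer b|)).
  rewrite addn0 -addnA (addnC #|layer a :&: layer b|) cardsUI addnA.
  apply: leq_trans Z_le (leq_trans (min_degree_le_degree e h) _).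
  exact: leq_trans (subset_leq_card Nh_sub) (leq_card_setU _ _).1.
exists (fun v => side (v, a)) => v w evw.
have [vP wP] : v \notin P /\ w \notin P by rewrite P0 !inE.
move: (vP) (wP); rewrite !inE !negb_or => /andP[vaS _] /andP[waS wbS].
by rewrite (side_edge vaS wbS evw neq_ab) eq_sym separated_outside_layers.
Qed.

End SplitFibre.

Theorem lemma2p4 (V : finType) (e : rel V) (n : nat) (S : {set V * 'I_n}) :
  simple_graph e ->
  connected_graph e ->
  ~ bipartite e ->
  vertex_connectivity e = min_degree e ->
  0 < min_degree e ->
  3 <= n ->
  #|S| = (n - 1) * min_degree e ->
  (forall u : V, fiber n u :\: S != set0) ->
  (forall x, x \notin S -> exists y, (y \notin S) && kron_Kn e n x y) ->
  forall u : V, forall x y, x \in fiber n u :\: S -> y \in fiber n u :\: S ->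
    connect (del_rel (kron_Kn e n) S) x y.
Proof.
move=> [e_sym e_irr] _ not_bip kappa_eq _ n_ge3 card_S _ no_isolated u [v a] [w b].
rewrite !inE /= => /andP[uaS /eqP uv] /andP[ubS /eqP uw]; subst v w.
apply: contraT => disc; case: not_bip.
apply: (bipartite_of_disconnected_fibre e_sym e_irr uaS ubS disc no_isolated n_ge3).
  by rewrite card_S.
by rewrite kappa_eq.
Qed.
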